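(* Let $K$ be a linearly ordered set and let $\{(\mathcal{A}_{k,\ell},\mathcal{A}_{k,r})\}_{k\in K}$ be pairs of subalgebras of a non-commutative space $(\mathcal{A},\varphi)$ which are bi-monotonically independent with respect to $\varphi$. Let $n\ge1$, $\chi:\{1,\dots,n\}\to\{\ell,r\}$, $\omega:\{1,\dots,n\}\to K$, and $a_1,\dots,a_n\in\mathcal{A}$ with $a_j\in\mathcal{A}_{\omega(j),\chi(j)}$. Let $V_1,\dots,V_m$ be the blocks of $\pi_{\chi,\omega}$ listed in the order for which $\max_{\prec_\chi}V_i\prec_\chi\min_{\prec_\chi}V_{i+1}$. If $k\in\{1,\dots,m\}$ satisfies $\omega(V_{k-1})<\omega(V_k)>\omega(V_{k+1})$ (where the first inequality is omitted if $k=1$ and the second if $k=m$), then \[\varphi(a_1\cdots a_n)=\varphi(a_{V_k})\,\varphi(a_W),\qquad W=\{1,\dots,n\}\setminus V_k.\]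
   Context: A non-commutative space $(\mathcal{A},\varphi)$ is a complex algebra with a linear functional, with $\varphi(1)=1$ if $\mathcal{A}$ is unital. For algebras $\mathcal{C}_k$, $\sqcup_k\mathcal{C}_k$ denotes the free product without identification of units, $*_k\mathcal{C}_k$ the free product of unital algebras with identification of units, and $\widetilde{\mathcal{C}}=\mathbb{C}1\oplus\mathcal{C}$ the unitization; $\widetilde{\mathcal{C}_1}*\widetilde{\mathcal{C}_2}\cong\widetilde{\mathcal{C}_1\sqcup\mathcal{C}_2}$. Notation. For $n\ge1$ and $\chi:\{1,\dots,n\}\to\{\ell,r\}$ with $\chi^{-1}(\{\ell\})=\{i_1<\dots<i_p\}$ and $\chi^{-1}(\{r\})=\{i_{p+1}>\dots>i_n\}$, let $\prec_\chi$ be the total order $i_1\prec_\chi\cdots\prec_\chi i_n$. A $\chi$-interval is an interval for $\prec_\chi$. For $V=\{v_1<\dots<v_s\}$ write $a_V=a_{v_1}\cdots a_{v_s}$; a functional applied to the empty product equals $1$. For $\omega:\{1,\dots,n\}\to K$, $\pi_{\chi,\omega}$ is the unique partition of $\{1,\dots,n\}$ into blocks $V_1,\dots,V_m$ such that each $V_k$ is a $\chi$-interval, $\max_{\prec_\chi}V_k\prec_\chi\min_{\prec_\chi}V_{k+1}$, $\omega$ is constant on each $V_k$, and $\omega(V_k)\ne\omega(V_{k+1})$. c-bi-free product. Given pairs of unital algebras $(\mathcal{B}_{k,\ell},\mathcal{B}_{k,r})_{k\in K}$ and unital linear functionals $\varphi_k,\psi_k$ on $\mathcal{B}_{k,\ell}*\mathcal{B}_{k,r}$,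 their c-bi-free product $(\varphi,\psi)$ is the unique pair of unital linear functionals on $*_k(\mathcal{B}_{k,\ell}*\mathcal{B}_{k,r})$ restricting to $\varphi_k,\psi_k$ and such that whenever $b_j\in\mathcal{B}_{\omega(j),\chi(j)}$ with $\psi(b_V)=0$ for all $V\in\pi_{\chi,\omega}$, then $\psi(b_1\cdots b_n)=0$ and $\varphi(b_1\cdots b_n)=\prod_{V\in\pi_{\chi,\omega}}\varphi(b_V)$. Bi-monotonic product. For pairs $(\mathcal{A}_{k,\ell},\mathcal{A}_{k,r})$, $k=1,2$, with linear functionals $\varphi_k$ on $\mathcal{A}_{k,\ell}\sqcup\mathcal{A}_{k,r}$: let $\widetilde{\varphi_k}$ be the unital extension to $\widetilde{\mathcal{A}_{k,\ell}\sqcup\mathcal{A}_{k,r}}$, $\delta_1$ the unital functional on $\widetilde{\mathcal{A}_{1,\ell}\sqcup\mathcal{A}_{1,r}}$ vanishing on $\mathcal{A}_{1,\ell}\sqcup\mathcal{A}_{1,r}$, and $(\widetilde\varphi,\widetilde\psi)$ the c-bi-free product of $(\widetilde{\varphi_1},\delta_1)$ and $(\widetilde{\varphi_2},\widetilde{\varphi_2})$ for the pairs $(\widetilde{\mathcal{A}_{k,\ell}},\widetilde{\mathcal{A}_{k,r}})$. Then $\varphi_1\rhd\!\!\rhd\varphi_2$ is the restriction of $\widetilde\varphi$ to $(\mathcal{A}_{1,\ell}\sqcup\mathcal{A}_{1,r})\sqcup(\mathcal{A}_{2,\ell}\sqcup\mathcal{A}_{2,r})$, regarded as a functional for the pair $(\mathcal{A}_{1,\ell}\sqcup\mathcal{A}_{2,\ell},\mathcal{A}_{1,r}\sqcup\mathcal{A}_{2,r})$.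 This product is associative, so iterated products $\varphi_{k_1}\rhd\!\!\rhd\cdots\rhd\!\!\rhd\varphi_{k_p}$ are well defined. Bi-monotonic independence. A family $\{(\mathcal{A}_{k,\ell},\mathcal{A}_{k,r})\}_{k\in K}$ of pairs of subalgebras of $(\mathcal{A},\varphi)$, $K$ linearly ordered, is bi-monotonically independent if for every finite $k_1<\dots<k_p$ in $K$, $\varphi\circ\iota=\varphi_{k_1}\rhd\!\!\rhd\cdots\rhd\!\!\rhd\varphi_{k_p}$, where $\iota:\sqcup_{j}(\mathcal{A}_{k_j,\ell}\sqcup\mathcal{A}_{k_j,r})\to\mathcal{A}$ is induced by the inclusions and $\varphi_k=\varphi\circ\iota|_{\mathcal{A}_{k,\ell}\sqcup\mathcal{A}_{k,r}}$. *)

From HB Require Import structures.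
From mathcomp Require Import all_boot all_order all_algebra.
Set Implicit Arguments. Unset Strict Implicit. Unset Printing Implicit Defensive.
Import Order.TTheory GRing.Theory.

(* Conventions: positions are 0,...,n-1 (the paper's 1,...,n shifted);
   sides are booleans: true = left (l), false = right (r). *)

(* The positions 0..n-1 listed in the order <_chi : left positions increasing,
   then right positions decreasing. *)
Definition chi_order (n : nat) (chi : nat -> bool) : seq nat :=
  [seq i <- iota 0 n | chi i] ++ rev [seq i <- iota 0 n | ~~ chi i].

Fixpoint group_runs (T : eqType) (f : nat -> T) (s : seq nat) : seq (seq nat) :=
  match s with
  | [::] => [::]
  | x :: s' =>
      match group_runs f s' with
      | [::] => [:: [:: x]]
      | b :: bs => if f x == f (head x b) then (x :: b) :: bs
                   else [:: x] :: b :: bs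
      end
  end.

(* The blocks V_1, ..., V_m of pi_{chi,omega}, listed so that
   max V_i <_chi min V_{i+1}; each block is listed in <_chi order. *)
Definition pi_blocks (T : eqType) (n : nat) (chi : nat -> bool) (om : nat -> T)
  : seq (seq nat) := group_runs om (chi_order n chi).

Section Alg.
Variables (R : fieldType) (A : lmodType R).

Definition nc_algebra (mul : A -> A -> A) : Prop :=
  [/\ associative mul, left_distributive mul +%R, right_distributive mul +%R,
      (forall (c : R) x y, mul (c *: x)%R y = (c *: mul x y)%R)
    & (forall (c : R) x y, mul x (c *: y)%R = (c *: mul x y)%R)].

Definition lin_functional (phi : A -> R) : Prop :=
  forall (c : R) x y, phi (c *: x + y)%R = (c * phi x + phi y)%R.

Definition subalgebra (mul : A -> A -> A) (S : pred A) : Prop :=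
  [/\ S 0%R, (forall x y, S x -> S y -> S (x + y)%R),
      (forall (c : R) x, S x -> S (c *: x)%R)
    & (forall x y, S x -> S y -> S (mul x y))].
End Alg.

Section Words.
Variables (R : fieldType) (A : lmodType R) (K : eqType).
Variable (mul : A -> A -> A).
Variable (Asub : K -> bool -> pred A).

(* A letter (k, s, a) stands for an element a of the atomic algebra A_{k,s};
   a word is a formal (free) product of letters; the empty word is the unit. *)
Definition letter := (K * bool * A)%type.
Definition wfun := seq letter -> R.

Definition validl (G : pred K) (l : letter) : bool :=
  G l.1.1 && Asub l.1.1 l.1.2 l.2.
Definition validw (G : pred K) (w : seq letter) : bool := all (validl G) w.

(* F (restricted to words in the atoms A_{k,s}, k in G) is a linear functional
   on the unitization of the free product (without identification of units)
   of the A_{k,s}, k in G, s in {l,r}: it is multilinear in the letters and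
   compatible with the product inside each atomic algebra. Its value on the
   unit is F [::]. *)
Definition valid_on (G : pred K) (F : wfun) : Prop :=
  [/\ (forall u v k s x y, validw G (u ++ v) -> G k -> Asub k s x -> Asub k s y ->
        F (u ++ (k, s, (x + y)%R) :: v) = (F (u ++ (k, s, x) :: v) + F (u ++ (k, s, y) :: v))%R),
      (forall u v k s (c : R) x, validw G (u ++ v) -> G k -> Asub k s x ->
        F (u ++ (k, s, (c *: x)%R) :: v) = (c * F (u ++ (k, s, x) :: v))%R)
    & (forall u v k s x y, validw G (u ++ v) -> G k -> Asub k s x -> Asub k s y ->
        F (u ++ (k, s, x) :: (k, s, y) :: v) = F (u ++ (k, s, mul x y) :: v))].

(* General elements of the (unitized) free product: formal linear
   combinations of words. *)
Definition elem := seq (R * seq letter).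
Definition extF (F : wfun) (x : elem) : R := (\sum_(cw <- x) cw.1 * F cw.2)%R.
Definition mulE (x y : elem) : elem :=
  [seq ((cw.1 * dv.1)%R, cw.2 ++ dv.2) | cw <- x, dv <- y].
Definition prodE (xs : seq elem) : elem := foldr mulE [:: (1%R, [::])] xs.
(* x lies in B_{G,s} = unitization of the free product of the A_{k,s}, k in G *)
Definition inB (G : pred K) (s : bool) (x : elem) : bool :=
  all (fun cw => all (fun l => validl G l && (l.1.2 == s)) cw.2) x.
Definition bprod (b : nat -> elem) (V : seq nat) : elem := prodE (map b (sort leq V)).

Definition uext (F : wfun) : wfun := fun w => if w is [::] then 1%R else F w.
Definition delta : wfun := fun w => if w is [::] then 1%R else 0%R.

(* The c-bi-freeness condition for two pairs: pair "true" has atoms with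
   K-index in G1, pair "false" has atoms with K-index in G2. *)
Definition is_cbifree (G1 G2 : pred K) (Phi Psi : wfun) : Prop :=
  forall (n : nat) (chi om : nat -> bool) (b : nat -> elem),
    0 < n ->
    (forall j, j < n -> inB (if om j then G1 else G2) (chi j) (b j)) ->
    (forall V, V \in pi_blocks n chi om -> extF Psi (bprod b V) = 0%R) ->
    extF Psi (bprod b (iota 0 n)) = 0%R /\
    extF Phi (bprod b (iota 0 n)) =
      (\prod_(V <- pi_blocks n chi om) extF Phi (bprod b V))%R.

Definition cbifree_product (G1 G2 : pred K) (phi1 psi1 phi2 psi2 Phi Psi : wfun)
  : Prop :=
  [/\ valid_on (predU G1 G2) Phi, valid_on (predU G1 G2) Psi,
      (forall w, validw G1 w -> Phi w = phi1 w /\ Psi w = psi1 w),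
      (forall w, validw G2 w -> Phi w = phi2 w /\ Psi w = psi2 w)
    & is_cbifree G1 G2 Phi Psi].

Definition bm_product (G1 G2 : pred K) (F1 F2 F12 : wfun) : Prop :=
  exists Phi Psi : wfun,
    cbifree_product G1 G2 (uext F1) delta (uext F2) (uext F2) Phi Psi /\
    (forall w, validw (predU G1 G2) w -> 0 < size w -> F12 w = Phi w).

Definition phiA (phi : A -> R) : wfun := fun w =>
  if w is l :: w' then phi (foldl mul l.2 (map (fun l' : letter => l'.2) w')) else 1%R.

Fixpoint bm_chain (phi : A -> R) (G : pred K) (F : wfun) (ks : seq K) : Prop :=
  match ks with
  | [::] => forall w, validw G w -> 0 < size w -> F w = phiA phi w
  | k :: ks' => exists F' : wfun,
      bm_product G (pred1 k) F (phiA phi) F' /\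
      bm_chain phi (predU G (pred1 k)) F' ks'
  end.
End Words.

Definition bm_indep (R : fieldType) (A : lmodType R) (d : Order.disp_t)
  (K : orderType d) (mul : A -> A -> A) (phi : A -> R)
  (Asub : K -> bool -> pred A) : Prop :=
  forall (k1 : K) (ks : seq K), sorted (fun x y => (x < y)%O) (k1 :: ks) ->
    bm_chain mul Asub phi (pred1 k1) (phiA mul phi) ks.

Definition phiS (R : fieldType) (A : lmodType R) (mul : A -> A -> A)
  (phi : A -> R) (a : nat -> A) (S : seq nat) : R :=
  if sort leq S is x :: s then phi (foldl mul (a x) (map a s)) else 1%R.

(* Let M be the largest colour occurring among the positions. Bi-monotonic
   independence says that, on the colours up to M, phi is the c-bi-free product
   (Phi, Psi) of (phi, delta) on the smaller colours and (phi, phi) on M. Let U be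
   a block of colour M whose neighbours have smaller colours, and consider the
   defect phi(a_S) - phi(a_U) phi(a_{S \ U}). Adding s.1 to a letter of colour M
   changes the defect by s times the defect with that letter removed, which
   vanishes by induction on |S|. So the letters of colour M may be shifted until
   every block of colour M is Psi-centred; blocks of smaller colours already are,
   because Psi = delta there. The c-bi-free relations then give phi(a_S) = 0 and
   phi(a_U) = Psi(a_U) = 0, so the defect is 0. A peak V of colour c < M is
   factored out by induction: a block B of colour M can be removed both from S and
   from S \ V, and V is still a peak of S \ B. *)
From Pilot Require Import Defs.
From HB Require Import structures.
From mathcomp Require Import all_boot all_order all_algebra.
From mathcomp Require Import ring.
Set Implicit Arguments. Unset Strict Implicit. Unset Printing Implicit Defensive.
Import Order.TTheory GRing.Theory.

(** * Sequences, runs and the order of positions *)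

Lemma filter_comm (T : Type) (p q : pred T) (s : seq T) :
  filter p (filter q s) = filter q (filter p s).
Proof. by rewrite -!filter_predI; apply: eq_filter => x /=; rewrite andbC. Qed.

Lemma size_filter_lt (T : eqType) (p : pred T) s x :
  x \in s -> ~~ p x -> size (filter p s) < size s.
Proof.
move=> hx hpx; rewrite size_filter -(count_predC p s) -addn1 leq_add2l.
by rewrite -has_count; apply/hasP; exists x.
Qed.

Lemma uniq_pivot_eq (T : eqType) (y : T) p1 q1 p2 q2 : uniq (p1 ++ y :: q1) ->
  p1 ++ y :: q1 = p2 ++ y :: q2 -> p1 = p2 /\ q1 = q2.
Proof.
move=> u e; have := uniq_eqseq_pivotl p2 q2 u.
by rewrite e eqxx => /esym /andP [/eqP -> /eqP ->].
Qed.

Lemma sorted_adjacent (T : Type) (e : rel T) s1 x y s2 :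
  sorted e (s1 ++ x :: y :: s2) -> e x y.
Proof.
case: s1 => [|z s1] /=; first by case/andP.
by rewrite cat_path => /andP [_] /= /andP [_ /andP []].
Qed.

Lemma sorted_rcons_lt d (T : orderType d) (s : seq T) (M : T) :
  sorted <%O (rcons s M) -> {in s, forall x, (x < M)%O}.
Proof.
move=> h x hx.
have : sorted (fun x y => (y < x)%O) (rev (rcons s M)) by rewrite rev_sorted.
rewrite rev_rcons /= => /(order_path_min (rev_trans lt_trans))/allP.
by apply; rewrite mem_rev.
Qed.

Lemma sort_leq_map_homo (p : nat -> nat) N L :
  {in [pred n | n < N] &, {homo p : i j / i <= j}} ->
  all (fun i => i < N) L -> sort leq (map p L) = map p (sort leq L).
Proof.
move=> hp hL.
have s1 : sorted leq (map p (sort leq L)).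
  apply: (homo_sorted_in (P := [pred n | n < N]) (e := leq)) => //.
    by rewrite all_sort.
  exact: sort_sorted leq_total L.
rewrite -(sorted_sort leq_trans s1).
apply/perm_sortP; [exact: leq_total|exact: leq_trans|exact: anti_leq|].
by apply: perm_map; rewrite perm_sym perm_sort.
Qed.

Lemma last_flatten (bs : seq (seq nat)) B : B != [::] ->
  last 0 (flatten (rcons bs B)) = last 0 B.
Proof. by rewrite -cats1 flatten_cat /= cats0 last_cat; case: B. Qed.

Lemma head_flatten (bs : seq (seq nat)) B :
  B != [::] -> head 0 (flatten (B :: bs)) = head 0 B.
Proof. by case: B. Qed.

Lemma uniq_flatten_mem (T : eqType) (bs : seq (seq T)) V :
  uniq (flatten bs) -> V \in bs -> uniq V.
Proof.
move=> u hV; case/splitPr: hV u => bs1 bs2.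
by rewrite flatten_cat /= !cat_uniq => /and3P [_ _ /and3P []].
Qed.

Lemma head_rev (s : seq nat) : head 0 (rev s) = last 0 s.
Proof. by case/lastP: s => // s x; rewrite rev_rcons last_rcons. Qed.

Lemma last_rev (s : seq nat) : last 0 (rev s) = head 0 s.
Proof. by rewrite -head_rev revK. Qed.

Lemma glue_choices (T : Type) (t0 : T) (bs : seq (seq nat))
    (Good : seq nat -> (nat -> T) -> Prop) :
  uniq (flatten bs) ->
  (forall V t1 t2, {in V, t1 =1 t2} -> Good V t1 -> Good V t2) ->
  (forall V, V \in bs -> exists t, Good V t) ->
  exists t, forall V, V \in bs -> Good V t.
Proof.
move=> + hloc; elim: bs => [|V bs IH] /=; first by exists (fun _ => t0).
rewrite cat_uniq => /and3P [uV dis ub] hex.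
have [t2 ht2] : exists t, forall V', V' \in bs -> Good V' t.
  by apply: IH => // V' hV'; apply: hex; rewrite inE hV' orbT.
have [t1 ht1] := hex V (mem_head _ _).
exists (fun i => if i \in V then t1 i else t2 i) => V'.
rewrite inE => /orP [/eqP ->|hV']; first by apply: hloc ht1 => i ->.
apply: hloc (ht2 V' hV') => i hi; case: ifP => // hiV.
by case/negP: dis; apply/hasP; exists i => //; apply/flattenP; exists V'.
Qed.

Definition flanked (Q : pred nat) (s1 s2 : seq nat) : bool :=
  ((s1 == [::]) || Q (last 0 s1)) && ((s2 == [::]) || Q (head 0 s2)).

Lemma flanked_sub (Q1 Q2 : pred nat) s1 s2 : (forall x, Q1 x -> Q2 x) ->
  flanked Q1 s1 s2 -> flanked Q2 s1 s2.
Proof.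
move=> h /andP [h1 h2]; apply/andP; split.
  by case/orP: h1 => [->//|/h ->]; rewrite orbT.
by case/orP: h2 => [->//|/h ->]; rewrite orbT.
Qed.

Lemma flanked_filter (Q p : pred nat) s1 s2 : (forall x, Q x -> p x) ->
  flanked Q s1 s2 -> flanked Q (filter p s1) (filter p s2).
Proof.
move=> hQp /andP [h1 h2]; apply/andP; split.
  case/lastP: s1 h1 => [|s1 y] //; rewrite last_rcons => /orP [/eqP e|hy].
    by case: s1 e.
  by rewrite filter_rcons (hQp _ hy) last_rcons hy orbT.
by case: s2 h2 => [|y s2] //= hy; rewrite (hQp _ hy) /= hy.
Qed.

Lemma flanked_right_filter (s s1 V s2 t1 U t2 : seq nat) (Qv Qu : pred nat) :
  uniq s -> s = s1 ++ V ++ s2 -> s = t1 ++ U ++ t2 -> U != [::] ->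
  {in U, forall x, (x \notin V) && ~~ Qv x} ->
  (s1 == [::]) || Qv (last 0 s1) -> (t2 == [::]) || Qu (head 0 t2) ->
  ([seq x <- t2 | x \notin V] == [::]) || Qu (head 0 [seq x <- t2 | x \notin V]).
Proof.
move=> us e1 e2 hU hUV h1; case: t2 e2 => [|y t2] //= e2 hy.
case: ifP => /= [_|/negbFE hyV]; first by [].
exfalso; case/splitPr: hyV e1 h1 hUV => V1 V2 e1 h1 hUV.
have e : (s1 ++ V1) ++ y :: (V2 ++ s2) = (t1 ++ U) ++ y :: t2.
  by rewrite -!catA -e2 e1 -catA.
have us' : uniq ((s1 ++ V1) ++ y :: (V2 ++ s2)) by rewrite e -catA -e2.
have [e' _] := uniq_pivot_eq us' e.
have lastU x : last x U = last 0 U by case: U hU {e e' hUV e2}.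
have hl : last 0 U \in U by case: U hU {e e' hUV e2 lastU} => // u U' _; exact: mem_last.
have /andP [hlV hlQ] := hUV _ hl.
have := congr1 (last 0) e'; rewrite !last_cat lastU.
case/lastP: V1 {e us' e1 hUV} e' hlV => [|V1 v] e' hlV.
  rewrite cats0 in e'; move: h1; rewrite e' last_cat lastU (negbTE hlQ) orbF.
  by case: (t1) => //; case: U hU {e' e2 hl hlV hlQ lastU}.
rewrite last_rcons => ev; move: hlV; rewrite -ev.
by rewrite mem_cat mem_rcons mem_head.
Qed.

Lemma flanked_filter_disjoint (s s1 V s2 t1 U t2 : seq nat) (Qv Qu : pred nat) :
  uniq s -> s = s1 ++ V ++ s2 -> s = t1 ++ U ++ t2 -> U != [::] ->
  {in U, forall x, (x \notin V) && ~~ Qv x} ->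
  flanked Qv s1 s2 -> flanked Qu t1 t2 ->
  flanked Qu [seq x <- t1 | x \notin V] [seq x <- t2 | x \notin V].
Proof.
move=> us e1 e2 hU hUV /andP [h1 h2] /andP [k1 k2]; apply/andP; split; last first.
  exact: flanked_right_filter us e1 e2 hU hUV h1 k2.
have rev_nil (t : seq nat) : (rev t == [::]) = (t == [::]) by rewrite -!size_eq0 size_rev.
have r1 : rev s = rev s2 ++ rev V ++ rev s1 by rewrite e1 !rev_cat catA.
have r2 : rev s = rev t2 ++ rev U ++ rev t1 by rewrite e2 !rev_cat catA.
have := flanked_right_filter (Qv := Qv) (Qu := Qu) _ r1 r2.
rewrite rev_uniq filter_rev !rev_nil last_rev !head_rev.
rewrite (eq_filter (a2 := fun x => x \notin V)); last by move=> x; rewrite mem_rev.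
apply => //.
by move=> x; rewrite !mem_rev; apply: hUV.
Qed.

Section GroupRuns.
Variables (T : eqType) (f : nat -> T).

Lemma flatten_group_runs s : flatten (group_runs f s) = s.
Proof.
elim: s => [|x s IH] //=.
case: (group_runs f s) IH => [|b bs] /=; first by move=> <-.
by case: ifP => _ /= <-.
Qed.

Lemma group_runs_consE x s : group_runs f (x :: s) =
  if group_runs f s is b :: bs then
    (if f x == f (head x b) then (x :: b) :: bs else [:: x] :: b :: bs)
  else [:: [:: x]].
Proof. by []. Qed.

Lemma group_runs_cons x s : exists b bs, group_runs f (x :: s) = (x :: b) :: bs.
Proof.
rewrite /=; case: (group_runs f s) => [|b bs]; first by exists [::], [::].
by case: ifP => _; [exists b, bs | exists [::], (b :: bs)].
Qed.

Lemma group_runs_block s B : B \in group_runs f s ->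
  B != [::] /\ all (fun y => f y == f (head 0 B)) B.
Proof.
elim: s B => [|x s IH] B //=.
case E: (group_runs f s) IH => [|b bs] IH.
  by rewrite inE => /eqP -> /=; rewrite eqxx.
case: ifP => hx; rewrite !inE => /orP [/eqP ->|hB].
- have [+ +] := IH b (mem_head _ _).
  case: b hx {E IH} => // y b /eqP hx _ /= /andP [hy hb].
  by rewrite eqxx /= hx hy.
- by apply: IH; rewrite inE hB orbT.
- by rewrite /= eqxx.
- exact: IH.
Qed.

Lemma mem_group_runs_last s B : B \in group_runs f s -> f (last 0 B) = f (head 0 B).
Proof.
move=> /group_runs_block [hne hall]; apply/eqP; apply: (allP hall).
by case: B hne {hall} => // x B _; exact: mem_last.
Qed.

Lemma sorted_group_runs s :
  sorted (fun B B' => f (head 0 B) != f (head 0 B')) (group_runs f s).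
Proof.
elim: s => [|x s IH] //=.
case E: (group_runs f s) IH => [|b bs] IH //.
have hb : b != [::] by have [] := @group_runs_block s b; rewrite ?E ?mem_head.
case: b hb E IH => // y b _ E IH.
case: ifP => hx /=; last by rewrite hx.
by case: bs {E} IH => //= B bs; rewrite (eqP hx).
Qed.

Lemma group_runs_const x s :
  all (fun y => f y == f x) s -> group_runs f (x :: s) = [:: x :: s].
Proof.
elim: s x => [|y s IH] x // hall.
have /andP [hy hs] : (f y == f x) && all (fun y => f y == f x) s := hall.
by rewrite group_runs_consE IH /= (eqP hy) ?eqxx.
Qed.

Lemma group_runs_cat s1 s2 : s1 != [::] -> s2 != [::] ->
  f (last 0 s1) != f (head 0 s2) ->
  group_runs f (s1 ++ s2) = group_runs f s1 ++ group_runs f s2.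
Proof.
elim: s1 => [|x s1 IH] // _ h2.
case: s1 IH => [|y s1] IH.
  clear IH; case: s2 h2 => // z s2 _ hxz; rewrite /= in hxz.
  have [b [bs E]] := group_runs_cons z s2.
  by rewrite cat1s group_runs_consE E /= (negbTE hxz).
move=> hl; rewrite cat_cons group_runs_consE IH //.
have [b [bs E]] := group_runs_cons y s1.
by rewrite E (group_runs_consE x (y :: s1)) E /=; case: ifP.
Qed.

Lemma segment_in_group_runs s1 U s2 c :
  U != [::] -> all (fun y => f y == c) U ->
  (s1 == [::]) || (f (last 0 s1) != c) -> (s2 == [::]) || (f (head 0 s2) != c) ->
  U \in group_runs f (s1 ++ U ++ s2).
Proof.
case: U => // x U _ hall h1 h2.
have hfx : f x = c by apply/eqP; apply: (allP hall); exact: mem_head.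
have hlast : f (last x U) = c by apply/eqP; apply: (allP hall); exact: mem_last.
have gU : group_runs f (x :: U) = [:: x :: U].
  apply: group_runs_const; apply/allP => z hz.
  by rewrite hfx; apply: (allP hall); rewrite inE hz orbT.
have gU2 : x :: U \in group_runs f ((x :: U) ++ s2).
  case: s2 h2 => [|z s2] h2; first by rewrite cats0 gU mem_head.
  by rewrite group_runs_cat // ?gU ?mem_head //= hlast eq_sym.
case: s1 h1 => [|y s1] h1; first exact: gU2.
by rewrite group_runs_cat // ?mem_cat ?gU2 ?orbT //= hfx.
Qed.

Lemma group_runs_map (p : nat -> nat) s :
  group_runs f (map p s) = map (map p) (group_runs (f \o p) s).
Proof.
elim: s => [|x s IH] //=; rewrite IH.
by case: (group_runs (f \o p) s) => [|[|y b] bs] //=; case: ifP.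
Qed.

End GroupRuns.

Section GroupRunsSplit.
Variables (T : eqType) (f : nat -> T).

Lemma group_runs_split s bs1 B bs2 : group_runs f s = bs1 ++ B :: bs2 ->
  s = flatten bs1 ++ B ++ flatten bs2 /\
  flanked (fun y => f y != f (head 0 B)) (flatten bs1) (flatten bs2).
Proof.
move=> e; split; first by rewrite -(flatten_group_runs f s) e flatten_cat.
have hne B' : B' \in bs1 ++ B :: bs2 -> B' != [::].
  by rewrite -e => /group_runs_block [].
have hadj := sorted_group_runs f s; rewrite e in hadj.
apply/andP; split.
- case/lastP: bs1 e hne hadj => [|bs1 B0] // e hne hadj; apply/orP; right.
  have hB0 : B0 \in group_runs f s by rewrite e mem_cat mem_rcons mem_head.
  rewrite last_flatten ?hne ?mem_cat ?mem_rcons ?mem_head //.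
  rewrite (mem_group_runs_last hB0).
  by move: hadj; rewrite cat_rcons; apply: sorted_adjacent.
- case: bs2 e hne hadj => [|B2 bs2] // e hne hadj; apply/orP; right.
  rewrite head_flatten ?hne ?mem_cat ?inE ?eqxx ?orbT //.
  by rewrite eq_sym; apply: sorted_adjacent hadj.
Qed.

Lemma exists_colour_block s c : c \in map f s ->
  exists s1 B s2, [/\ s = s1 ++ B ++ s2, B != [::], all (fun y => f y == c) B
                     & flanked (fun y => f y != c) s1 s2].
Proof.
case/mapP => j + ->; rewrite -{1}(flatten_group_runs f s) => /flattenP [B hB hjB].
have [hBne hBc] := group_runs_block hB.
have hBj : f (head 0 B) = f j by apply/esym/eqP/(allP hBc).
have [bs1 [bs2 /group_runs_split [-> hfl]]] : exists bs1 bs2, group_runs f s = bs1 ++ B :: bs2.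
  by case/splitPr: hB => bs1 bs2; exists bs1, bs2.
by exists (flatten bs1), B, (flatten bs2); rewrite -hBj.
Qed.

End GroupRunsSplit.

Section Peaks.
Variables (d : Order.disp_t) (T : orderType d) (f : nat -> T).

Lemma flanked_peak s k : let bs := group_runs f s in let V := nth [::] bs k in
  k < size bs ->
  ((k == 0) || (f (head 0 (nth [::] bs k.-1)) < f (head 0 V))%O) &&
  ((k.+1 == size bs) || (f (head 0 (nth [::] bs k.+1)) < f (head 0 V))%O) ->
  flanked (fun y => f y < f (head 0 V))%O (flatten (take k bs)) (flatten (drop k.+1 bs)).
Proof.
move=> bs V hk /andP [p1 p2].
have hne B : B \in bs -> B != [::] by case/group_runs_block.
apply/andP; split.
- have [->|kpos] := posnP k; first by rewrite take0.
  have hk1 : k.-1 < size bs by rewrite (leq_ltn_trans (leq_pred k)).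
  rewrite -(prednK kpos) (take_nth [::]) // last_flatten ?hne ?mem_nth //.
  rewrite (mem_group_runs_last (mem_nth [::] hk1)); apply/orP; right.
  by move: p1; rewrite eqn0Ngt kpos.
- have [hk2||->] := ltngtP k.+1 (size bs); last by rewrite drop_size.
  + rewrite (drop_nth [::] hk2) head_flatten ?hne ?mem_nth //; apply/orP; right.
    by move: p2; rewrite (ltn_eqF hk2).
  + by rewrite ltnNge hk.
Qed.

End Peaks.

Definition chi_arrange (chi : nat -> bool) (P : seq nat) : seq nat :=
  [seq i <- P | chi i] ++ rev [seq i <- P | ~~ chi i].

Lemma chi_orderE n chi : chi_order n chi = chi_arrange chi (iota 0 n).
Proof. by []. Qed.

Lemma chi_arrange_filter chi (p : pred nat) P :
  chi_arrange chi (filter p P) = filter p (chi_arrange chi P).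
Proof.
rewrite /chi_arrange filter_cat filter_rev -!filter_predI.
by congr (_ ++ rev _); apply: eq_filter => x /=; rewrite andbC.
Qed.

Lemma perm_chi_arrange chi P : perm_eq (chi_arrange chi P) P.
Proof.
by rewrite /chi_arrange perm_sym -{1}(perm_filterC chi P) perm_cat2l perm_sym perm_rev.
Qed.

Lemma mem_chi_arrange chi P : chi_arrange chi P =i P.
Proof. exact/perm_mem/perm_chi_arrange. Qed.

Lemma chi_arrange_map (p : nat -> nat) chi s :
  map p (chi_arrange (chi \o p) s) = chi_arrange chi (map p s).
Proof. by rewrite /chi_arrange map_cat map_rev !filter_map. Qed.

(** * Formal products and c-bi-freeness *)

Section FormalProducts.
Variables (R : fieldType) (A : lmodType R) (K : eqType).
Local Notation elemT := (elem A K).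
Local Open Scope ring_scope.

Definition shiftE (x : elemT) (t : R) : elemT := x ++ [:: (t, [::])].

Definition upd (bb : nat -> elemT) j (x : elemT) : nat -> elemT :=
  fun i => if i == j then x else bb i.

Lemma extF_mulE (F : wfun A K) X Y :
  extF F (mulE X Y) = \sum_(cw <- X) cw.1 * extF (fun v => F (cw.2 ++ v)) Y.
Proof.
rewrite /extF /mulE big_allpairs_dep; apply: eq_bigr => cw _.
by rewrite big_distrr; apply: eq_bigr => dv _ /=; rewrite mulrA.
Qed.

Lemma extF_word (F : wfun A K) w : extF F [:: (1, w)] = F w.
Proof. by rewrite /extF big_cons big_nil addr0 mul1r. Qed.

Lemma extF_prodED (xs1 xs2 : seq elemT) x y (F : wfun A K) :
  extF F (prodE (xs1 ++ (x ++ y) :: xs2)) =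
  extF F (prodE (xs1 ++ x :: xs2)) + extF F (prodE (xs1 ++ y :: xs2)).
Proof.
elim: xs1 F => [|z xs1 IH] F /=; first by rewrite !extF_mulE big_cat.
rewrite !extF_mulE -big_split /=; apply: eq_bigr => cw _.
by rewrite IH mulrDr.
Qed.

Lemma extF_prodE_scalar (xs1 xs2 : seq elemT) t (F : wfun A K) :
  extF F (prodE (xs1 ++ [:: (t, [::])] :: xs2)) = t * extF F (prodE (xs1 ++ xs2)).
Proof.
elim: xs1 F => [|z xs1 IH] F /=; first by rewrite extF_mulE big_cons big_nil addr0.
rewrite !extF_mulE big_distrr /=; apply: eq_bigr => cw _.
by rewrite IH mulrCA.
Qed.

Lemma extF_prodE_shift (xs1 xs2 : seq elemT) x t (F : wfun A K) :
  extF F (prodE (xs1 ++ shiftE x t :: xs2)) =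
  extF F (prodE (xs1 ++ x :: xs2)) + t * extF F (prodE (xs1 ++ xs2)).
Proof. by rewrite /shiftE extF_prodED extF_prodE_scalar. Qed.

Lemma map_upd_notin bb j x L : j \notin L -> map (upd bb j x) L = map bb L.
Proof.
move=> hj; apply/eq_in_map => i hi; rewrite /upd.
by case: eqP => // eij; rewrite -eij hi in hj.
Qed.

Lemma extF_prodE_map_shift bb j t L (F : wfun A K) : uniq L -> j \in L ->
  extF F (prodE (map (upd bb j (shiftE (bb j) t)) L)) =
  extF F (prodE (map bb L)) + t * extF F (prodE (map bb [seq i <- L | i != j])).
Proof.
move=> uL hj; case/splitPr: hj uL => L1 L2 uL.
have [h1 h2] : j \notin L1 /\ j \notin L2.
  move: uL; rewrite cat_uniq /= => /and4P [_ + h2 _].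
  by rewrite negb_or => /andP [].
rewrite !map_cat /= !map_upd_notin // /upd eqxx extF_prodE_shift.
rewrite filter_cat /= eqxx /= !(@eq_in_filter _ _ predT) ?filter_predT ?map_cat //.
  by move=> i hi /=; apply/eqP => eij; rewrite -eij hi in h2.
by move=> i hi /=; apply/eqP => eij; rewrite -eij hi in h1.
Qed.

Lemma prodE_letters (ls : seq (letter A K)) :
  prodE (map (fun l => [:: (1, [:: l])]) ls) = [:: (1, ls)].
Proof. by elim: ls => [|l ls IH] //=; rewrite IH /mulE /= mulr1. Qed.

Lemma extF_bprod_shift (F : wfun A K) bb j s V : uniq V ->
  extF F (bprod (upd bb j (shiftE (bb j) s)) V) =
  if j \in V then extF F (bprod bb V) + s * extF F (bprod bb (filter (predC1 j) V))
  else extF F (bprod bb V).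
Proof.
move=> uV; rewrite /bprod; case: ifP => hj.
  rewrite extF_prodE_map_shift ?sort_uniq ?mem_sort //.
  by rewrite (filter_sort leq_total leq_trans).
by rewrite map_upd_notin // mem_sort hj.
Qed.

Lemma prodE_letter_elems (L : seq nat) (bb : nat -> elemT) :
  {in L, forall j, exists l, bb j = [:: (1, [:: l])]} ->
  exists w, prodE (map bb L) = [:: (1, w)] /\ size w = size L.
Proof.
elim: L => [|j L IH] h /=; first by exists [::].
have [w [-> sw]] : exists w, prodE (map bb L) = [:: (1, w)] /\ size w = size L.
  by apply: IH => i hi; apply: h; rewrite inE hi orbT.
have [l ->] := h j (mem_head _ _).
by exists (l :: w); rewrite /mulE /= mulr1 sw.
Qed.

End FormalProducts.

Section Shifts.
Variables (R : fieldType) (A : lmodType R) (K : eqType) (F : wfun A K).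
Hypothesis F_nil : F [::] != 0%R.
Local Open Scope ring_scope.

Let shifts (bb : nat -> elem A K) (t : nat -> R) L :=
  prodE (map (fun i => shiftE (bb i) (t i)) L).

Lemma extF_shifts_cons bb t j s L : j \notin L ->
  extF F (shifts bb (fun i => if i == j then s else t i) (j :: L)) =
  extF F (prodE (bb j :: map (fun i => shiftE (bb i) (t i)) L)) + s * extF F (shifts bb t L).
Proof.
move=> hj; rewrite /shifts /= eqxx.
have -> : map (fun i => shiftE (bb i) (if i == j then s else t i)) L =
          map (fun i => shiftE (bb i) (t i)) L.
  by apply/eq_in_map => i hi; case: eqP => // eij; rewrite -eij hi in hj.
exact: (extF_prodE_shift [::]).
Qed.

Lemma exists_shift_neq0 (L : seq nat) (bb : nat -> elem A K) : uniq L ->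
  exists t : nat -> R, extF F (shifts bb t L) != 0.
Proof.
elim: L => [|j L IH] /=; first by exists (fun _ => 0); rewrite /shifts extF_word.
case/andP => hj /IH [t ht].
set e := extF F (prodE (bb j :: map (fun i => shiftE (bb i) (t i)) L)).
have [s hs] : exists s, e + s * extF F (shifts bb t L) != 0.
  by case: (eqVneq e 0) => he; [exists 1; rewrite he add0r mul1r | exists 0; rewrite mul0r addr0].
by exists (fun i => if i == j then s else t i); rewrite extF_shifts_cons.
Qed.

Lemma exists_shift_eq0 (L : seq nat) (bb : nat -> elem A K) : uniq L -> L != [::] ->
  exists t : nat -> R, extF F (shifts bb t L) = 0.
Proof.
case: L => [|j L] //= /andP [hj /(exists_shift_neq0 bb) [t ht]] _.
set e := extF F (prodE (bb j :: map (fun i => shiftE (bb i) (t i)) L)).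
exists (fun i => if i == j then - e / extF F (shifts bb t L) else t i).
by rewrite extF_shifts_cons // -/e divfK // addrN.
Qed.

End Shifts.

Section ValidElements.
Variables (R : fieldType) (A : lmodType R) (K : eqType) (Asub : K -> bool -> pred A).
Local Notation elemT := (elem A K).
Local Open Scope ring_scope.

Definition valid_elem (G : pred K) (x : elemT) := all (fun cw => validw Asub G cw.2) x.

Lemma inB_valid_elem G s x : inB Asub G s x -> valid_elem G x.
Proof.
move=> /allP h; apply/allP => cw /h /allP h2; apply/allP => l /h2.
by case/andP.
Qed.

Lemma valid_elem_mulE G x y : valid_elem G x -> valid_elem G y -> valid_elem G (mulE x y).
Proof.
move=> /allP hx /allP hy; apply/allP => cw /allpairsPdep [c1 [c2 [h1 h2 ->]]] /=.
by rewrite /validw all_cat; apply/andP; split; [apply: hx | apply: hy].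
Qed.

Lemma valid_elem_bprod G P bb : {in P, forall j, valid_elem G (bb j)} ->
  valid_elem G (bprod bb P).
Proof.
rewrite /bprod => h; have : {subset sort leq P <= P} by move=> x; rewrite mem_sort.
elim: (sort leq P) => [|j s IH] hs //=.
apply: valid_elem_mulE; first exact/h/hs/mem_head.
by apply: IH => i hi; apply/hs; rewrite inE hi orbT.
Qed.

Lemma eq_extF_valid (F1 F2 : wfun A K) G x :
  {in validw Asub G, F1 =1 F2} -> valid_elem G x -> extF F1 x = extF F2 x.
Proof.
move=> h /allP hx; rewrite /extF !big_seq; apply: eq_bigr => cw /hx hv.
by rewrite h.
Qed.

End ValidElements.

Lemma cbifree_sorted (R : fieldType) (A : lmodType R) (K : eqType)
  (Asub : K -> bool -> pred A) (G1 G2 : pred K) (Phi Psi : wfun A K) :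
  is_cbifree Asub G1 G2 Phi Psi ->
  forall (P : seq nat) (chi col : nat -> bool) (b : nat -> elem A K),
  sorted ltn P -> P != [::] ->
  {in P, forall j, inB Asub (if col j then G1 else G2) (chi j) (b j)} ->
  (forall V, V \in group_runs col (chi_arrange chi P) -> extF Psi (bprod b V) = 0%R) ->
  extF Phi (bprod b P) =
    (\prod_(V <- group_runs col (chi_arrange chi P)) extF Phi (bprod b V))%R.
Proof.
move=> hcb P chi col b sP hP hb hcent.
set N := size P; set p := nth 0 P.
have pP : map p (iota 0 N) = P := mkseq_nth 0 P.
have hmono : {in [pred i | i < N] &, {homo p : i j / i <= j}}.
  apply: (sorted_leq_nth leq_trans leqnn).
  by move: sP; rewrite ltn_sorted_uniq_leq => /andP [].
have bprodE V : all (fun i => i < N) V -> bprod (b \o p) V = bprod b (map p V).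
  by move=> hV; rewrite /bprod (sort_leq_map_homo hmono hV) -map_comp.
have runsE : group_runs col (chi_arrange chi P) =
    map (map p) (pi_blocks N (chi \o p) (col \o p)).
  by rewrite /pi_blocks chi_orderE -group_runs_map chi_arrange_map pP.
have blockN V : V \in pi_blocks N (chi \o p) (col \o p) -> all (fun i => i < N) V.
  move=> hV; apply/allP => i hi.
  have : i \in chi_order N (chi \o p).
    by rewrite -(flatten_group_runs (col \o p) (chi_order _ _)); apply/flattenP; exists V.
  by rewrite chi_orderE mem_chi_arrange mem_iota.
have N0 : 0 < N by rewrite lt0n size_eq0.
have -> : bprod b P = bprod (b \o p) (iota 0 N).
  by rewrite bprodE ?pP //; apply/allP => i; rewrite mem_iota.
rewrite (proj2 (hcb N (chi \o p) (col \o p) (b \o p) N0 _ _)).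
- rewrite runsE big_map big_seq [RHS]big_seq; apply: eq_bigr => V hV.
  by rewrite bprodE ?blockN.
- by move=> j hj; apply: hb; exact: mem_nth.
- by move=> V hV; rewrite bprodE ?blockN //; apply: hcent; rewrite runsE map_f.
Qed.

(** * Factoring out a block of the top colour *)

Section TwoLevels.
Variables (R : fieldType) (A : lmodType R) (K : eqType) (Asub : K -> bool -> pred A).
Variables (Phi Psi : wfun A K) (G1 : pred K) (M : K) (col chi : nat -> bool).
Hypothesis cbifree_PhiPsi : is_cbifree Asub G1 (pred1 M) Phi Psi.
Hypothesis Psi_low : {in validw Asub G1, Psi =1 @delta R A K}.
Hypothesis Phi_top : {in validw Asub (pred1 M), Phi =1 Psi}.
Local Open Scope ring_scope.
Local Notation elemT := (elem A K).
Local Notation runs P := (group_runs col (chi_arrange chi P)).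

Lemma Psi_nil : Psi [::] = 1.
Proof. by rewrite Psi_low. Qed.

(* [col j] says that position [j] belongs to the lower pair [G1]; the other
   positions carry atoms of the top colour [M]. Lower positions hold single
   letters, so their blocks are words, which [Psi = delta] sends to 0. *)
Definition admissible (P : seq nat) (bb : nat -> elemT) :=
  {in P, forall j, inB Asub (if col j then G1 else pred1 M) (chi j) (bb j) /\
                   (col j -> exists l, bb j = [:: (1, [:: l])])}.

Definition defect (P U : seq nat) (bb : nat -> elemT) : R :=
  extF Phi (bprod bb P) -
  extF Psi (bprod bb U) * extF Phi (bprod bb [seq x <- P | x \notin U]).

Lemma col_runs P V j : V \in runs P -> j \in V -> col j = col (head 0 V).
Proof. by move=> /group_runs_block [_ /allP h] /h /eqP. Qed.

Lemma runs_subset P V : V \in runs P -> {subset V <= P}.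
Proof.
move=> hV j hj; rewrite -(mem_chi_arrange chi) -(flatten_group_runs col (chi_arrange _ _)).
by apply/flattenP; exists V.
Qed.

Lemma letters_centered P bb V : admissible P bb -> V \in runs P -> col (head 0 V) ->
  extF Psi (bprod bb V) = 0.
Proof.
move=> hadm hV hc; have hVP := runs_subset hV.
have [w [ew sw]] :
    exists w, prodE (map bb (sort leq V)) = [:: (1, w)] /\ size w = size (sort leq V).
  apply: prodE_letter_elems => j; rewrite mem_sort => hj.
  by apply: (hadm j (hVP j hj)).2; rewrite (col_runs hV hj).
have hv : valid_elem Asub G1 (bprod bb V).
  apply: valid_elem_bprod => j hj; have [+ _] := hadm j (hVP j hj).
  by rewrite (col_runs hV hj) hc; apply: inB_valid_elem.
move: hv; rewrite /bprod ew /valid_elem /= andbT => hv.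
rewrite extF_word Psi_low //.
have [hV0 _] := group_runs_block hV.
by case: w ew sw hv => //= _; rewrite size_sort => /esym /size0nil eV; rewrite eV in hV0.
Qed.

Lemma Phi_bprod_eq0 P U bb : sorted ltn P -> admissible P bb ->
  U \in runs P -> ~~ col (head 0 U) ->
  (forall V, V \in runs P -> ~~ col (head 0 V) -> extF Psi (bprod bb V) = 0) ->
  extF Phi (bprod bb P) = 0.
Proof.
move=> sP hadm hU hUc hcent.
have hP : P != [::].
  by have [+ _] := group_runs_block hU; apply: contraNneq => eP; rewrite eP in hU.
rewrite (cbifree_sorted cbifree_PhiPsi (chi := chi) (col := col) sP hP); first last.
- move=> V hV; case hc: (col (head 0 V)); last by rewrite hcent ?hc.
  exact: letters_centered hadm hV hc.
- by move=> j /hadm [].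
rewrite (big_rem U) //=.
have -> : extF Phi (bprod bb U) = extF Psi (bprod bb U).
  apply: (eq_extF_valid (G := pred1 M)); first exact: Phi_top.
  apply: valid_elem_bprod => j hj; have [+ _] := hadm j (runs_subset hU hj).
  by rewrite (col_runs hU hj) (negbTE hUc); apply: inB_valid_elem.
by rewrite hcent // mul0r.
Qed.

Lemma defect_shift P U bb j s : uniq P -> uniq U -> j \in P ->
  defect P U (upd bb j (shiftE (bb j) s)) =
  defect P U bb + s * defect (filter (predC1 j) P) (filter (predC1 j) U) bb.
Proof.
move=> uP uU hj; rewrite /defect !extF_bprod_shift ?filter_uniq // hj.
case hU: (j \in U).
- rewrite mem_filter hU /=.
  have -> : [seq x <- filter (predC1 j) P | x \notin filter (predC1 j) U] =
            [seq x <- P | x \notin U].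
    rewrite -filter_predI; apply: eq_filter => x /=; rewrite mem_filter /=.
    by case: (eqVneq x j) => [->|hne]; rewrite ?eqxx ?hU ?hne /= ?andbT.
  ring.
- rewrite mem_filter hU hj /=.
  have -> : filter (predC1 j) U = U.
    by apply/all_filterP/allP => x hx /=; apply/eqP => exj; rewrite -exj hx in hU.
  rewrite filter_comm; ring.
Qed.

Definition shift_on (L : seq nat) (t : nat -> R) (bb : nat -> elemT) : nat -> elemT :=
  fun j => if (j \in L) && ~~ col j then shiftE (bb j) (t j) else bb j.

Lemma eq_defect P U bb1 bb2 : bb1 =1 bb2 -> defect P U bb1 = defect P U bb2.
Proof. by move=> e; rewrite /defect /bprod !(eq_map e). Qed.

Lemma eq_admissible P bb1 bb2 : bb1 =1 bb2 -> admissible P bb1 -> admissible P bb2.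
Proof. by move=> e hadm j hj; rewrite -e; apply: hadm. Qed.

Lemma admissible_shift P bb j s : admissible P bb -> ~~ col j ->
  admissible P (upd bb j (shiftE (bb j) s)).
Proof.
move=> hadm hcj i hi; rewrite /upd; case: eqP => [eij|_]; last exact: hadm.
rewrite eij in hi *; have [+ _] := hadm j hi.
by rewrite (negbTE hcj) /inB /shiftE all_cat => -> /=.
Qed.

Lemma defect_shift_on P U bb t :
  (forall bb' j, admissible P bb' -> j \in P -> ~~ col j ->
     defect (filter (predC1 j) P) (filter (predC1 j) U) bb' = 0) ->
  uniq P -> uniq U -> admissible P bb ->
  forall L, uniq L -> {subset L <= P} ->
    defect P U (shift_on L t bb) = defect P U bb /\ admissible P (shift_on L t bb).
Proof.
move=> hrem uP uU hadm; elim=> [|j L IH] /=.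
  move=> _ _; have e : shift_on [::] t bb =1 bb by move=> i; rewrite /shift_on in_nil.
  by rewrite (eq_defect _ _ e); split; last exact: eq_admissible hadm.
case/andP => hj uL hsub.
have [|IH1 IH2] := IH uL; first by move=> x hx; rewrite hsub // inE hx orbT.
have hjP : j \in P by apply/hsub/mem_head.
case hc: (col j).
  have e : shift_on (j :: L) t bb =1 shift_on L t bb.
    by move=> i; rewrite /shift_on inE; case: (eqVneq i j) => [->|]; rewrite ?hc ?andbF.
  by rewrite (eq_defect _ _ e); split; last exact: eq_admissible IH2.
have e : shift_on (j :: L) t bb =1 upd (shift_on L t bb) j (shiftE (shift_on L t bb j) (t j)).
  move=> i; rewrite /shift_on /upd inE.
  by case: (eqVneq i j) => [->|hij] /=; rewrite ?hc ?(negbTE hj).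
split; last by apply: eq_admissible (admissible_shift (t j) IH2 (negbT hc)) => i; rewrite e.
by rewrite (eq_defect _ _ e) defect_shift // hrem ?negbT // mulr0 addr0.
Qed.

Lemma exists_centering P bb : uniq P ->
  exists t, forall V, V \in runs P -> ~~ col (head 0 V) ->
    extF Psi (bprod (shift_on P t bb) V) = 0.
Proof.
move=> uP.
have ubs : uniq (flatten (runs P)).
  by rewrite flatten_group_runs (perm_uniq (perm_chi_arrange chi P)).
pose Good V (t : nat -> R) := ~~ col (head 0 V) ->
  extF Psi (prodE (map (fun j => shiftE (bb j) (t j)) (sort leq V))) = 0.
have [t ht] : exists t, forall V, V \in runs P -> Good V t.
  apply: (glue_choices 0 ubs).
  - move=> V t1 t2 e h1 h2; rewrite -h1 //; congr (extF _ (prodE _)).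
    by apply/eq_in_map => j; rewrite mem_sort => /e ->.
  - move=> V hV; have [hne _] := group_runs_block hV.
    have Psi_nz : Psi [::] != 0 by rewrite Psi_nil oner_neq0.
    have hV0 : sort leq V != [::] by rewrite -size_eq0 size_sort size_eq0.
    have uV : uniq (sort leq V) by rewrite sort_uniq; exact: uniq_flatten_mem ubs hV.
    by have [t ht] := exists_shift_eq0 Psi_nz bb uV hV0; exists t.
exists t => V hV hc; rewrite -(ht V hV hc) /bprod; congr (extF _ (prodE _)).
apply/eq_in_map => j; rewrite mem_sort => hj.
by rewrite /shift_on (runs_subset hV hj) (col_runs hV hj) hc.
Qed.

(* Shifting the top-colour letters by scalars leaves the defect unchanged, and
   suitable shifts make every top-colour block Psi-centred. *)
Lemma defect_eq0_of_removals P U bb s1 s2 :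
  sorted ltn P -> chi_arrange chi P = s1 ++ U ++ s2 -> U != [::] ->
  all (fun y => ~~ col y) U -> flanked col s1 s2 -> admissible P bb ->
  (forall bb' j, admissible P bb' -> j \in P -> ~~ col j ->
     defect (filter (predC1 j) P) (filter (predC1 j) U) bb' = 0) ->
  defect P U bb = 0.
Proof.
move=> sP hch hU hUc /andP [h1 h2] hadm hrem.
have uP : uniq P := sorted_uniq ltn_trans ltnn sP.
have uU : uniq U.
  have := perm_uniq (perm_chi_arrange chi P); rewrite uP hch.
  by rewrite !cat_uniq => /and3P [_ _ /and3P []].
have hUh : ~~ col (head 0 U).
  by case: U hU hUc {hch uU hrem} => // x U' _ /andP [].
have hUrun : U \in runs P.
  rewrite hch; apply: (segment_in_group_runs (c := false)) hU _ _ _.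
  - by apply/allP => x /(allP hUc) /negbTE ->.
  - by case: (col _) h1; rewrite ?orbT ?orbF.
  - by case: (col _) h2; rewrite ?orbT ?orbF.
have [t ht] := exists_centering bb uP.
have [<- hadm'] := defect_shift_on t hrem uP uU hadm uP (fun x hx => hx).
by rewrite /defect (Phi_bprod_eq0 sP hadm' hUrun hUh ht) ht // mul0r subrr.
Qed.

Lemma defect_eq0 P U bb s1 s2 :
  sorted ltn P -> chi_arrange chi P = s1 ++ U ++ s2 -> U != [::] ->
  all (fun y => ~~ col y) U -> flanked col s1 s2 -> admissible P bb ->
  defect P U bb = 0.
Proof.
have [N] := ubnP (size P); elim: N P U bb s1 s2 => // N IH P U bb s1 s2 hN.
move=> sP hch hU hUc hfl hadm.
apply: (defect_eq0_of_removals sP hch hU hUc hfl hadm) => bb' j hadm' hj hcj.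
have [->|hU'] := eqVneq (filter (predC1 j) U) [::].
  by rewrite /defect /bprod /= extF_word Psi_nil mul1r filter_predT subrr.
apply: (IH _ _ _ (filter (predC1 j) s1) (filter (predC1 j) s2)) => //.
- by rewrite -ltnS (leq_ltn_trans _ hN) // (size_filter_lt hj) //= eqxx.
- by apply: sorted_filter => //; exact: ltn_trans.
- by rewrite chi_arrange_filter hch !filter_cat.
- by apply/allP => x; rewrite mem_filter => /andP [_ /(allP hUc)].
- by apply: flanked_filter hfl => x hx /=; apply: contraTneq hx => ->.
- by move=> x; rewrite mem_filter => /andP [_ hx]; apply: hadm'.
Qed.
End TwoLevels.

Section TopPair.
Variables (R : fieldType) (A : lmodType R) (d : Order.disp_t) (K : orderType d).
Variables (mul : A -> A -> A) (phi : A -> R) (Asub : K -> bool -> pred A).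

(* What bi-monotonic independence gives on colours [G] below a maximal colour
   [M]: phi is there the c-bi-free product of (phi, delta) and (phi, phi). *)
Definition top_pair (G : pred K) (M : K) (Phi Psi : wfun A K) : Prop :=
  [/\ is_cbifree Asub G (pred1 M) Phi Psi,
      {in validw Asub G, Psi =1 @delta R A K},
      {in validw Asub (pred1 M), Phi =1 Psi},
      Phi [::] = 1%R
    & {in validw Asub (predU G (pred1 M)), forall w, 0 < size w -> Phi w = phiA mul phi w}].

Lemma bm_chain_rcons (M : K) ks : forall (G : pred K) (F : wfun A K),
  bm_chain mul Asub phi G F (rcons ks M) ->
  exists (G' : pred K) (F0 F' : wfun A K),
    [/\ G' =1 predU G (mem ks),
        bm_product mul Asub G' (pred1 M) F0 (phiA mul phi) F'
      & {in validw Asub (predU G' (pred1 M)), forall w, 0 < size w -> F' w = phiA mul phi w}].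
Proof.
elim: ks => [|k ks IH] G F /=.
  by case=> F' [hp hc]; exists G, F, F'; split => // x /=; rewrite in_nil orbF.
case=> F1 [_ /IH [G' [F0 [F' [eG hp hc]]]]].
by exists G', F0, F'; split => // x; rewrite eG /= inE orbA.
Qed.

Lemma bm_indep_top_pair (k1 M : K) ks : bm_indep mul phi Asub ->
  sorted <%O (k1 :: rcons ks M) ->
  exists (G : pred K) (Phi Psi : wfun A K), G =1 mem (k1 :: ks) /\ top_pair G M Phi Psi.
Proof.
move=> hind /hind /bm_chain_rcons [G [F0 [F' [eG [Phi [Psi [[_ _ h1 h2 hcb] hF]]] hc]]]].
exists G, Phi, Psi; split; first by move=> x; rewrite eG.
split => //.
- by move=> w /h1 [].
- by move=> w /h2 [-> ->].
- by have [-> _] := h1 [::] isT.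
- by move=> w hw hsz; rewrite -hF // hc.
Qed.

End TopPair.

(** * Peaks *)

Section PeakFactorization.
Variables (R : fieldType) (A : lmodType R) (d : Order.disp_t) (K : orderType d).
Variables (mul : A -> A -> A) (phi : A -> R) (Asub : K -> bool -> pred A).
Variables (n : nat) (chi : nat -> bool) (om : nat -> K) (a : nat -> A).
Hypothesis ha : forall j, j < n -> Asub (om j) (chi j) (a j).
Local Notation phiS := (phiS mul phi a).

Definition letter_elem (j : nat) : elem A K := [:: (1%R, [:: (om j, chi j, a j)])].

Lemma extF_letters_phiS (Phi : wfun A K) (G : pred K) S :
  {in validw Asub G, forall w, 0 < size w -> Phi w = phiA mul phi w} -> Phi [::] = 1%R ->
  {in S, forall j, (j < n) && G (om j)} ->
  extF Phi (bprod letter_elem S) = phiS S.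
Proof.
move=> hPhi h0 hS.
have hvalid j : j \in sort leq S -> validl Asub G (om j, chi j, a j).
  by rewrite mem_sort => /hS /andP [hj hG]; rewrite /validl /= hG ha.
rewrite /bprod; have -> : map letter_elem (sort leq S) = map (fun l => [:: (1%R, [:: l])])
   (map (fun j => (om j, chi j, a j)) (sort leq S)) by rewrite -map_comp.
rewrite prodE_letters extF_word /phiS.
case E: (sort leq S) hvalid => [|x s] //= hvalid.
rewrite hPhi /= -?map_comp // unfold_in /= hvalid ?mem_head //=.
by apply/allP => _ /mapP [j hj ->]; rewrite hvalid // inE hj orbT.
Qed.

Lemma phiS_top_block G M Phi Psi P U s1 s2 :
  top_pair mul phi Asub G M Phi Psi ->
  {in P, forall j, (j < n) && predU G (pred1 M) (om j)} ->
  sorted ltn P -> chi_arrange chi P = s1 ++ U ++ s2 -> U != [::] ->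
  all (fun y => om y == M) U -> flanked (fun y => om y != M) s1 s2 ->
  phiS P = (phiS U * phiS [seq x <- P | x \notin U])%R.
Proof.
move=> [hcb Psi_low Phi_top Phi_nil hPhi] hP sP hch hU hUM hfl.
have hUP : {subset U <= P}.
  by move=> x hx; rewrite -(mem_chi_arrange chi) hch !mem_cat hx orbT.
have hadm : admissible Asub G M (fun y => om y != M) chi P letter_elem.
  move=> j /hP /andP [hjn hG]; split; last by eexists.
  rewrite /inB /letter_elem /= !andbT /validl /= ha // eqxx !andbT.
  have [->|ne] := eqVneq (om j) M; first by rewrite /= eqxx.
  by move: hG => /orP [//|/eqP hM]; rewrite hM eqxx in ne.
have hUM' : all (fun y => ~~ (om y != M)) U.
  by apply/allP => y /(allP hUM); rewrite negbK.
have Phi_phiS S : {subset S <= P} -> extF Phi (bprod letter_elem S) = phiS S.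
  by move=> hS; apply: extF_letters_phiS hPhi Phi_nil _ => j /hS /hP.
have Psi_U : extF Psi (bprod letter_elem U) = extF Phi (bprod letter_elem U).
  symmetry; apply: (eq_extF_valid (Asub := Asub) (G := pred1 M)) => //.
  apply: valid_elem_bprod => j hj; rewrite /valid_elem /letter_elem /= /validw /= /validl /=.
  by rewrite (allP hUM j hj) ha //; case/andP: (hP j (hUP j hj)).
move: (defect_eq0 hcb Psi_low Phi_top sP hch hU hUM' hfl hadm).
rewrite /defect Psi_U !Phi_phiS // => [/eqP|x]; first by rewrite subr_eq0 => /eqP.
by rewrite mem_filter => /andP [].
Qed.

Lemma phiS_whole S V : chi_arrange chi S = V ->
  phiS S = (phiS V * phiS [seq x <- S | x \notin V])%R.
Proof.
move=> hch.
have -> : [seq x <- S | x \notin V] = [::].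
  rewrite (eq_in_filter (a2 := pred0)) ?filter_pred0 // => x.
  by rewrite -hch mem_chi_arrange => ->.
rewrite [phiS [::]]/Defs.phiS /= mulr1 /Defs.phiS.
have -> : sort leq V = sort leq S.
  apply/perm_sortP; [exact: leq_total|exact: leq_trans|exact: anti_leq|].
  by rewrite -hch perm_chi_arrange.
by [].
Qed.

Hypothesis hind : bm_indep mul phi Asub.

Lemma exists_top_pair S y z : y \in S -> z \in S -> (om y < om z)%O ->
  exists G M Phi Psi, [/\ top_pair mul phi Asub G M Phi Psi, M \in map om S
    & {in S, forall j, (om j <= M)%O && predU G (pred1 M) (om j)}].
Proof.
move=> hy hz hyz.
set cs := sort <=%O (undup (map om S)).
have mcs x : (x \in cs) = (x \in map om S) by rewrite mem_sort mem_undup.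
have scs : sorted <%O cs.
  by rewrite lt_sorted_uniq_le sort_uniq undup_uniq (sort_sorted le_total).
have ycs : om y \in cs by rewrite mcs map_f.
have zcs : om z \in cs by rewrite mcs map_f.
case Ecs: cs ycs zcs scs => [|k1 ks0] // ycs zcs scs.
case/lastP: ks0 Ecs ycs zcs scs => [|ks M] Ecs ycs zcs scs.
  by move: ycs zcs hyz; rewrite !inE => /eqP -> /eqP ->; rewrite ltxx.
have [G [Phi [Psi [eG htop]]]] := bm_indep_top_pair hind scs.
exists G, M, Phi, Psi; split => //.
  by rewrite -mcs Ecs -rcons_cons mem_rcons mem_head.
move=> j hj; have : om j \in k1 :: rcons ks M by rewrite -Ecs mcs map_f.
rewrite -rcons_cons mem_rcons inE => /orP [/eqP ->|hjk]; first by rewrite lexx /= eqxx orbT.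
have hjM : (om j < M)%O by apply: (sorted_rcons_lt (s := k1 :: ks)) => //; rewrite rcons_cons.
by rewrite /= eG [mem _ _]hjk (ltW hjM).
Qed.

Lemma exists_lower_neighbour S V s1 s2 c :
  chi_arrange chi S = s1 ++ V ++ s2 -> flanked (fun y => om y < c)%O s1 s2 ->
  ~~ ((s1 == [::]) && (s2 == [::])) -> exists2 y, y \in S & (om y < c)%O.
Proof.
move=> hch /andP [p1 p2]; rewrite negb_and => /orP [] hne.
  exists (last 0 s1); last by move: p1; rewrite (negbTE hne).
  rewrite -(mem_chi_arrange chi) hch mem_cat.
  by case/lastP: (s1) hne => // s x _; rewrite last_rcons mem_rcons mem_head.
exists (head 0 s2); last by move: p2; rewrite (negbTE hne).
rewrite -(mem_chi_arrange chi) hch !mem_cat.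
by case: (s2) hne => // x s _; rewrite mem_head !orbT.
Qed.

(* A block [B] of the top colour is a peak of both [S] and [S \ V]. *)
Lemma phiS_peak_below_top G M Phi Psi S V s1 s2 c t1 B t2 :
  top_pair mul phi Asub G M Phi Psi ->
  {in S, forall j, (j < n) && predU G (pred1 M) (om j)} -> sorted ltn S ->
  chi_arrange chi S = s1 ++ V ++ s2 -> flanked (fun y => om y < c)%O s1 s2 ->
  chi_arrange chi S = t1 ++ B ++ t2 -> B != [::] -> all (fun y => om y == M) B ->
  flanked (fun y => om y != M) t1 t2 ->
  {in B, forall x, (x \notin V) && ~~ (om x < c)%O} ->
  phiS [seq x <- S | x \notin B] =
    (phiS V * phiS [seq x <- [seq x <- S | x \notin B] | x \notin V])%R ->
  phiS S = (phiS V * phiS [seq x <- S | x \notin V])%R.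
Proof.
move=> htop hP sS hch hfl echB hBne hBM flB hBV e2.
have uch : uniq (chi_arrange chi S).
  by rewrite (perm_uniq (perm_chi_arrange chi S)) (sorted_uniq ltn_trans ltnn sS).
have e3 : phiS [seq x <- S | x \notin V] =
    (phiS B * phiS [seq x <- [seq x <- S | x \notin V] | x \notin B])%R.
  apply: (phiS_top_block htop _ _ _ hBne hBM).
  - by move=> j; rewrite mem_filter => /andP [_ /hP].
  - by apply: sorted_filter => //; exact: ltn_trans.
  - rewrite chi_arrange_filter echB !filter_cat; congr (_ ++ _ ++ _).
    by apply/all_filterP/allP => x /hBV /andP [].
  - exact: flanked_filter_disjoint uch hch echB hBne hBV hfl flB.
by rewrite (phiS_top_block htop hP sS echB hBne hBM flB) e2 e3 filter_comm mulrCA.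
Qed.

Lemma phiS_peak S V s1 s2 c : sorted ltn S -> {in S, forall j, j < n} ->
  chi_arrange chi S = s1 ++ V ++ s2 -> V != [::] -> all (fun y => om y == c) V ->
  flanked (fun y => om y < c)%O s1 s2 ->
  phiS S = (phiS V * phiS [seq x <- S | x \notin V])%R.
Proof.
have [N] := ubnP (size S); elim: N S V s1 s2 c => // N IH S V s1 s2 c hN.
move=> sS hSn hch hV hVc hfl.
have [/andP [/eqP e1 /eqP e2]|hne] := boolP ((s1 == [::]) && (s2 == [::])).
  by apply: phiS_whole; rewrite hch e1 e2 cats0.
have [y hyS hy] := exists_lower_neighbour hch hfl hne.
have [z hzV] : exists z, z \in V by case: (V) hV => // z V' _; exists z; rewrite mem_head.
have hzc : om z = c by apply/eqP; apply: (allP hVc).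
have hzS : z \in S by rewrite -(mem_chi_arrange chi) hch !mem_cat hzV orbT.
have hyz : (om y < om z)%O by rewrite hzc.
have [G [M [Phi [Psi [htop hMS hle]]]]] := exists_top_pair hyS hzS hyz.
have hP : {in S, forall j, (j < n) && predU G (pred1 M) (om j)}.
  by move=> j hj; rewrite hSn //; case/andP: (hle j hj).
have [ecM|ncM] := eqVneq c M.
  apply: phiS_top_block htop hP sS hch hV _ _; first by rewrite -ecM.
  by apply: flanked_sub hfl => x; rewrite -ecM => /lt_eqF ->.
have cltM : (c < M)%O by rewrite lt_neqAle ncM -hzc; case/andP: (hle z hzS).
have [t1 [B [t2 [echB hBne hBM flB]]]] : exists t1 B t2,
    [/\ chi_arrange chi S = t1 ++ B ++ t2, B != [::], all (fun y => om y == M) B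
       & flanked (fun y => om y != M) t1 t2].
  by apply: exists_colour_block; rewrite (perm_mem (perm_map om (perm_chi_arrange chi S))).
have hBV : {in B, forall x, (x \notin V) && ~~ (om x < c)%O}.
  move=> x /(allP hBM) /eqP hxM; rewrite hxM (lt_gtF cltM) andbT.
  by apply/negP => /(allP hVc); rewrite hxM eq_sym (negbTE ncM).
have [j0 hj0B] : exists j0, j0 \in B by case: (B) hBne => // j0 B' _; exists j0; rewrite mem_head.
have hj0S : j0 \in S by rewrite -(mem_chi_arrange chi) echB !mem_cat hj0B orbT.
apply: (phiS_peak_below_top htop hP sS hch hfl echB hBne hBM flB hBV).
apply: (IH _ _ [seq x <- s1 | x \notin B] [seq x <- s2 | x \notin B] c) => //.
- by rewrite -ltnS (leq_ltn_trans _ hN) // (size_filter_lt hj0S) ?hj0B.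
- by apply: sorted_filter => //; exact: ltn_trans.
- by move=> j; rewrite mem_filter => /andP [_ /hSn].
- rewrite chi_arrange_filter hch !filter_cat; congr (_ ++ _ ++ _).
  by apply/all_filterP/allP => x hx; apply/negP => /hBV /andP []; rewrite hx.
- by apply: flanked_filter hfl => x hx; apply/negP => /hBV /andP [_]; rewrite hx.
Qed.

End PeakFactorization.

Theorem corollary2p6 (R : fieldType) (A : lmodType R) (mul : A -> A -> A)
  (phi : A -> R) (d : Order.disp_t) (K : orderType d)
  (Asub : K -> bool -> pred A)
  (hA : nc_algebra mul) (hphi : lin_functional phi)
  (hsub : forall k s, subalgebra mul (Asub k s))
  (hind : bm_indep mul phi Asub)
  (n : nat) (hn : 0 < n) (chi : nat -> bool) (om : nat -> K) (a : nat -> A)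
  (ha : forall j, j < n -> Asub (om j) (chi j) (a j))
  (k : nat) (hk : k < size (pi_blocks n chi om))
  (hpeak :
     ((k == 0) ||
      (om (head 0 (nth [::] (pi_blocks n chi om) k.-1))
         < om (head 0 (nth [::] (pi_blocks n chi om) k)))%O) &&
     ((k.+1 == size (pi_blocks n chi om)) ||
      (om (head 0 (nth [::] (pi_blocks n chi om) k.+1))
         < om (head 0 (nth [::] (pi_blocks n chi om) k)))%O)) :
  phiS mul phi a (iota 0 n) =
    (phiS mul phi a (nth [::] (pi_blocks n chi om) k) *
     phiS mul phi a [seq j <- iota 0 n | j \notin nth [::] (pi_blocks n chi om) k])%R.
Proof.
have runsE : pi_blocks n chi om = group_runs om (chi_arrange chi (iota 0 n)) by [].
set bs := pi_blocks n chi om in hk hpeak runsE *.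
set V := nth [::] bs k in hpeak *.
have egr : group_runs om (chi_arrange chi (iota 0 n)) = take k bs ++ V :: drop k.+1 bs.
  by rewrite -runsE /V -(drop_nth [::] hk) cat_take_drop.
have [ech _] := group_runs_split egr.
have [hV hVc] := group_runs_block (mem_nth [::] hk).
apply: (phiS_peak ha hind (iota_ltn_sorted 0 n) _ ech hV hVc (flanked_peak hk hpeak)).
by move=> j; rewrite mem_iota.
Qed.
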